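(* Let $r:\mathbb{R}\to[0,1]$, $0<\phi\le1$, $\eta_\lambda>0$, $\alpha\in(0,1)$, and let $(\lambda^*,c^* )$ be a fixed point of $F(\lambda,c)=\big(\phi\lambda-\eta_\lambda(r(\lambda)-c),\ (1-\alpha)c+\alpha r(\lambda)\big)$ (so $r(\lambda^* )=c^*$), with $r$ differentiable at $\lambda^*$ and $s=r'(\lambda^* )$. Consider the stochastic recursion $\lambda_{t+1}=\phi\lambda_t-\eta_\lambda(r_t-c_t)$, $c_{t+1}=(1-\alpha)c_t+\alpha r_t$, where the empirical flip rate is $r_t=r(\lambda_t)+\xi_t$ with $\mathbb{E}[\xi_t\mid\lambda_t]=0$ and $|\xi_t|\le\delta$ almost surely for some $\delta>0$. If the Jacobian $J=\begin{pmatrix}\phi-\eta_\lambda s & \eta_\lambda\\ \alpha s & 1-\alpha\end{pmatrix}$ has spectral radius $\rho(J)<1$, then the trajectory $(\lambda_t,c_t)$ is almost surely bounded, i.e. $\sup_{t\ge0}\|(\lambda_t,c_t)\|<\infty$ almost surely.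
   Context: Interpretation: within a mean-field approximation with RBM parameters frozen at $\theta^*$, $r(\lambda)=r(\theta^*,\lambda)$ is the mean Gibbs-sampler flip rate at log-temperature $\lambda$ (temperature $e^\lambda$), and $c_t$ is an exponentially smoothed reference flip rate. *)

From HB Require Import structures.
From mathcomp Require Import all_boot all_order all_algebra.
From mathcomp Require Import all_classical all_reals all_analysis.
From mathcomp Require Import complex.
Set Implicit Arguments. Unset Strict Implicit. Unset Printing Implicit Defensive.
Import Order.TTheory GRing.Theory Num.Theory.
Local Open Scope ring_scope.
Local Open Scope classical_set_scope.

Definition flipJ (R : realType) (phi eta alpha s : R) : 'M[R]_2 :=
  \matrix_(i < 2, j < 2)
    (if (val i == 0)%N then (if (val j == 0)%N then phi - eta * s else eta)
     else (if (val j == 0)%N then alpha * s else 1 - alpha)).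

Definition spectral_radius_lt1 (R : realType) (A : 'M[R]_2) : Prop :=
  forall z : R[i], eigenvalue (map_mx (real_complex R) A) z -> `|z| < 1.

(* E[X | Y] = 0 : X is integrable and for every Borel set B,
   E[X ; Y in B] = 0 (defining property of conditional expectation given sigma(Y)). *)
Definition cond_mean_zero d (T : measurableType d) (R : realType)
  (P : probability T R) (X Y : T -> R) : Prop :=
  P.-integrable setT (EFin \o X) /\
  forall B : set R, measurable B ->
    (\int[P]_(x in Y @^-1` B) (X x)%:E = 0)%E.

From HB Require Import structures.
From mathcomp Require Import all_boot all_order all_algebra.
From mathcomp Require Import all_classical all_reals all_analysis.
From mathcomp Require Import complex.
From mathcomp Require Import ring lra.
Import Order.TTheory GRing.Theory Num.Theory.
Local Open Scope ring_scope.
Local Open Scope classical_set_scope.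

(* Boundedness holds pathwise, for every bounded noise, with no use of the
   fixed point or of the spectral condition. The reference rate c_t is an
   exponential average of values r(lam_t) + xi_t in [-delta, 1 + delta], hence
   bounded. With q = eta / alpha the noise cancels from w_t = lam_t + q c_t:
   w_{t+1} = phi w_t + (1 - phi) q c_t, again an averaging step (phi <= 1) of a
   bounded input, so w_t is bounded, and so is lam_t = w_t - q c_t. *)

Lemma convex_recursion_normr_le {R : realDomainType} (k B : R) (u v : nat -> R) :
  0 <= k <= 1 -> (forall t, `|v t| <= B) ->
  (forall t, u t.+1 = k * u t + (1 - k) * v t) ->
  forall t, `|u t| <= Num.max `|u 0%N| B.
Proof.
move=> /andP[k0 k1] vB uS; set M := Num.max _ _.
have vM t : `|v t| <= M by rewrite le_max vB orbT.
elim=> [|t IH]; first by rewrite le_max lexx.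
rewrite uS; apply: (le_trans (ler_normD _ _)).
rewrite !normrM (ger0_norm k0) (@ger0_norm _ (1 - k)) ?subr_ge0 //.
have -> : M = k * M + (1 - k) * M by ring.
by rewrite lerD // ler_wpM2l ?subr_ge0 // vM.
Qed.

Lemma sqrt_sum_sqr_le_normD {R : rcfType} (x y : R) :
  Num.sqrt (x ^+ 2 + y ^+ 2) <= `|x| + `|y|.
Proof.
rewrite -(ger0_norm (addr_ge0 (normr_ge0 x) (normr_ge0 y))) -sqrtr_sqr.
rewrite ler_sqrt ?sqr_ge0 // sqrrD -(real_normK (num_real x)).
rewrite -(real_normK (num_real y)).
have := mulr_ge0 (normr_ge0 x) (normr_ge0 y); lra.
Qed.

Lemma flip_rate_recursion_bounded {R : realType} {r : R -> R}
    {phi eta alpha delta : R} (lam c xi : nat -> R) :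
  (forall x, 0 <= r x <= 1) ->
  0 < phi <= 1 -> 0 < eta -> 0 < alpha < 1 ->
  (forall t, lam t.+1 = phi * lam t - eta * ((r (lam t) + xi t) - c t)) ->
  (forall t, c t.+1 = (1 - alpha) * c t + alpha * (r (lam t) + xi t)) ->
  (forall t, `|xi t| <= delta) ->
  exists M : R, forall t : nat, Num.sqrt (lam t ^+ 2 + c t ^+ 2) <= M.
Proof.
move=> r01 /andP[phi0 phi1] eta0 /andP[alpha0 alpha1] lamS cS xiB.
set K := Num.max `|c 0%N| (1 + delta).
have cK : forall t, `|c t| <= K.
  apply: (convex_recursion_normr_le (1 - alpha) (1 + delta) c
    (fun t => r (lam t) + xi t)) => [|t|t].
  - by apply/andP; split; lra.
  - have /andP[r0 r1] := r01 (lam t); apply: (le_trans (ler_normD _ _)).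
    by rewrite ger0_norm // lerD.
  - by rewrite cS; ring.
set q := eta / alpha.
have q0 : 0 < q by rewrite divr_gt0.
have qalpha : q * alpha = eta by rewrite mulfVK // gt_eqF.
set U := Num.max `|lam 0%N + q * c 0%N| (q * K).
have wU : forall t, `|lam t + q * c t| <= U.
  apply: (convex_recursion_normr_le phi (q * K)
    (fun t => lam t + q * c t) (fun t => q * c t)) => [|t|t].
  - by rewrite (ltW phi0).
  - by rewrite normrM gtr0_norm // ler_pM2l.
  - by rewrite lamS cS -qalpha; ring.
exists (U + q * K + K) => t.
apply: (le_trans (sqrt_sum_sqr_le_normD _ _)); apply: lerD (cK t).
have lamB : `|lam t| <= `|lam t + q * c t| + `|q * c t|.
  by rewrite -[X in `|X|](addrK (q * c t)) ler_normB.
apply: (le_trans lamB); apply: lerD (wU t) _.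
by rewrite normrM gtr0_norm // ler_pM2l.
Qed.

Theorem proposition1 (R : realType) (d : measure_display) (T : measurableType d)
  (P : probability T R)
  (r : R -> R) (phi eta alpha delta lam_s c_s s : R)
  (lam c xi : nat -> T -> R) :
  (forall x, 0 <= r x <= 1) ->
  0 < phi <= 1 -> 0 < eta -> 0 < alpha < 1 -> 0 < delta ->
  (* (lam_s, c_s) is a fixed point of F *)
  phi * lam_s - eta * (r lam_s - c_s) = lam_s ->
  (1 - alpha) * c_s + alpha * r lam_s = c_s ->
  (* r differentiable at lam_s with derivative s *)
  is_derive lam_s 1 r s ->
  (* the stochastic recursion, with r_t = r(lam_t) + xi_t *)
  (forall t, measurable_fun setT (lam t)) ->
  (forall t x, lam t.+1 x = phi * lam t x - eta * ((r (lam t x) + xi t x) - c t x)) ->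
  (forall t x, c t.+1 x = (1 - alpha) * c t x + alpha * (r (lam t x) + xi t x)) ->
  (forall t, cond_mean_zero P (xi t) (lam t)) ->
  (forall t, {ae P, forall x, `|xi t x| <= delta}) ->
  spectral_radius_lt1 (flipJ phi eta alpha s) ->
  {ae P, forall x, exists M : R, forall t : nat,
      Num.sqrt (lam t x ^+ 2 + c t x ^+ 2) <= M}.
Proof.
move=> r01 phi01 eta0 alpha01 _ _ _ _ _ lamS cS _ xiB _.
apply: filterS (ae_foralln xiB) => x xixB.
exact: (flip_rate_recursion_bounded (fun t => lam t x) (fun t => c t x)
  (fun t => xi t x) r01 phi01 eta0 alpha01 (lamS^~ x) (cS^~ x) xixB).
Qed.
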